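(* Let $I\subseteq R$ be an $\mathfrak m$-primary monomial ideal with $\mu_i=x_i^{d_i}\in G(I)$ for $i=1,\dots,n$. If $I$ is good, then every minimal generator $x_1^{\alpha_1}\cdots x_n^{\alpha_n}\in G(I)$ satisfies $\frac{\alpha_1}{d_1}+\cdots+\frac{\alpha_n}{d_n}\ge 1$.
   Context: Let $\mathbb K$ be a field, $R=\mathbb K[x_1,\dots,x_n]$, $\mathfrak m=\langle x_1,\dots,x_n\rangle$, $\mathbb N=\{0,1,2,\dots\}$. A monomial $x_1^{\alpha_1}\cdots x_n^{\alpha_n}$ is identified with the point $(\alpha_1,\dots,\alpha_n)\in\mathbb N^n$. For a monomial ideal $I$, $G(I)$ denotes its (unique) minimal monomial generating set. If $I$ is an $\mathfrak m$-primary monomial ideal, then for each $i$ there is a unique $d_i\ge1$ with $x_i^{d_i}\in G(I)$; write $\mu_i=x_i^{d_i}$. For $(a_1,\dots,a_n)\in\mathbb N^n$ the box associated to $I$ is $B_{a_1,\dots,a_n}=([a_1d_1,(a_1+1)d_1]\times\cdots\times[a_nd_n,(a_n+1)d_n])\cap\mathbb N^n$; a monomial belongs to a box if its exponent vector does. $I$ is called good if for every integer $l\ge1$, every element of $G(I^l)$ belongs to some box $B_{a_1,\dots,a_n}$ with $a_1+\dots+a_n=l-1$; otherwise $I$ is called bad. *)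

(* Monomial ideals of K[x_1..x_n] are encoded by their sets of
   monomials, i.e. up-closed subsets of N^n (exponent vectors). *)
From HB Require Import structures.
From mathcomp Require Import all_boot all_order all_algebra.
Set Implicit Arguments. Unset Strict Implicit. Unset Printing Implicit Defensive.

(* exponent vectors in N^n, identified with monomials x^alpha *)
Definition mono (n : nat) := {ffun 'I_n -> nat}.

(* componentwise order: x^a divides x^b *)
Definition mle n (a b : mono n) : Prop := forall i, a i <= b i.

Definition mone n : mono n := [ffun => 0].

Definition xpow n (i : 'I_n) (k : nat) : mono n :=
  [ffun j => if j == i then k else 0].

Definition is_monomial_ideal n (I : mono n -> Prop) : Prop :=
  forall a b, I a -> mle a b -> I b.

(* membership in the minimal monomial generating set G(I) *)
Definition mingen n (I : mono n -> Prop) (a : mono n) : Prop :=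
  I a /\ forall b, I b -> mle b a -> b = a.

(* m-primary monomial ideal: proper (1 not in I) and some power of every
   variable lies in I (equivalently, sqrt I = m) *)
Definition m_primary n (I : mono n -> Prop) : Prop :=
  ~ I (mone n) /\ forall i, exists k, I (xpow i k).

(* product of l monomials (sum of exponent vectors) *)
Definition msum n l (f : 'I_l -> mono n) : mono n :=
  [ffun i => \sum_(j < l) f j i].

(* the monomials of I^l: multiples of products of l monomials of I *)
Definition mpow n (I : mono n -> Prop) (l : nat) (a : mono n) : Prop :=
  exists f : 'I_l -> mono n, (forall j, I (f j)) /\ mle (msum f) a.

Definition in_box n (d : 'I_n -> nat) (c : mono n) (g : mono n) : Prop :=
  forall i, c i * d i <= g i <= (c i).+1 * d i.

Definition good n (I : mono n -> Prop) (d : 'I_n -> nat) : Prop :=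
  forall l, 0 < l -> forall g, mingen (mpow I l) g ->
    exists c : mono n, \sum_(i < n) c i = l.-1 /\ in_box d c g.

From HB Require Import structures.
From mathcomp Require Import all_boot all_order all_algebra.
From Stdlib Require Import Classical.
From mathcomp Require Import lra.
Set Implicit Arguments. Unset Strict Implicit. Unset Printing Implicit Defensive.
Import Order.TTheory GRing.Theory Num.Theory.

(* Let g be a minimal generator of I and s = sum_i g_i / d_i.
   For every l > 0 the monomial g^l lies in I^l, so some minimal generator h
   of I^l divides g^l.  Goodness puts h in a box B_c with |c| = l - 1, whence
   c_i d_i <= h_i <= l g_i, and dividing by d_i and summing gives
   l - 1 <= l s. *)

Definition mdeg n (a : mono n) : nat := \sum_(i < n) a i.

Lemma mle_trans n (a b c : mono n) : mle a b -> mle b c -> mle a c.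
Proof. by move=> ab bc i; exact: leq_trans (ab i) (bc i). Qed.

Lemma mle_mdeg_eq n (a b : mono n) : mle a b -> mdeg a = mdeg b -> a = b.
Proof.
rewrite /mdeg => ab e.
have [_ /esym] := @leqif_sum _ predT (fun i => a i == b i) (fun i => a i)
  (fun i => b i) (fun i _ => leqif_eq (ab i)).
rewrite e eqxx => /forallP eq_ab.
by apply/ffunP => i; apply/eqP/(implyP (eq_ab i)).
Qed.

Lemma mdeg_le n (a b : mono n) : mle a b -> mdeg a <= mdeg b.
Proof. by move=> ab; apply: leq_sum => i _; exact: ab. Qed.

Lemma mdeg_lt n (a b : mono n) : mle a b -> a <> b -> mdeg a < mdeg b.
Proof.
move=> ab ne_ab; rewrite ltn_neqAle mdeg_le // andbT.
by apply/negP => /eqP e; exact: ne_ab (mle_mdeg_eq ab e).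
Qed.

Lemma mingen_below n (P : mono n -> Prop) (h : mono n) :
  P h -> exists2 m, mingen P m & mle m h.
Proof.
have [k] : exists k, mdeg h <= k by exists (mdeg h).
elim: k h => [|k IH] h le_hk Ph.
  exists h => //; split=> // b Pb bh; apply: mle_mdeg_eq => //.
  by apply/eqP; rewrite eqn_leq mdeg_le // (leq_trans le_hk).
case: (classic (forall b, P b -> mle b h -> b = h)) => [min_h | ].
  by exists h.
move=> /not_all_ex_not [b not_min_b].
have [Pb not_min_b'] := imply_to_and _ _ not_min_b.
have [bh ne_bh] := imply_to_and _ _ not_min_b'.
have [m min_m mb] : exists2 m, mingen P m & mle m b.
  by apply: IH Pb; rewrite -ltnS (leq_trans (mdeg_lt bh ne_bh)).
by exists m => //; exact: mle_trans mb bh.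
Qed.

Lemma mpow_power n (I : mono n -> Prop) (l : nat) (g : mono n) :
  I g -> mpow I l [ffun i => l * g i].
Proof.
move=> Ig; exists (fun _ => g); split=> // i.
by rewrite !ffunE sum_nat_const card_ord.
Qed.

Lemma pure_power_pos n (I : mono n -> Prop) (i : 'I_n) (k : nat) :
  ~ I (mone n) -> I (xpow i k) -> 0 < k.
Proof.
move=> not_one Ik; rewrite lt0n; apply/eqP => k0; apply: not_one.
by rewrite (_ : mone n = xpow i k) //; apply/ffunP => j; rewrite !ffunE k0 if_same.
Qed.

Lemma good_power_bound n (I : mono n -> Prop) (d : 'I_n -> nat) (g : mono n) l :
  (forall i, 0 < d i) -> good I d -> I g -> 0 < l ->
  ((l.-1)%:R <= l%:R * \sum_(i < n) ((g i)%:R / (d i)%:R) :> rat)%R.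
Proof.
move=> d_pos good_I Ig l_pos.
have [h min_h h_le] := mingen_below (mpow_power l Ig).
have [c [c_sum c_box]] := good_I l l_pos h min_h.
rewrite -c_sum natr_sum mulr_sumr; apply: ler_sum => i _.
have c_le : c i * d i <= l * g i.
  by have /andP[c_h _] := c_box i; move: (h_le i); rewrite ffunE; exact: leq_trans.
by rewrite mulrA ler_pdivlMr ?ltr0n // -!natrM ler_nat.
Qed.

(* archimedean limit: if l - 1 <= l s for all l > 0, then 1 <= s, since
   otherwise l (1 - s) <= 1 fails for l beyond 1 / (1 - s) *)
Lemma ge1_of_power_bounds (R : archiRealFieldType) (s : R) :
  (forall l, 0 < l -> ((l.-1)%:R <= l%:R * s :> R)%R) -> (1 <= s)%R.
Proof.
move=> bound; rewrite leNgt; apply/negP => s_lt1.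
have gap : (0 < 1 - s)%R by rewrite subr_gt0.
have [m m_gt] : exists m, ((1 - s)^-1 < m%:R)%R.
  by exists (Num.bound (1 - s)^-1); apply: archi_boundP; rewrite invr_ge0 ltW.
have big : (1 < m%:R * (1 - s))%R by rewrite -ltr_pdivrMr // mul1r.
have := bound m.+1 isT; rewrite /= -natr1.
nra.
Qed.

Theorem mainTheorem2 (n : nat) (I : mono n -> Prop) (d : 'I_n -> nat) :
  is_monomial_ideal I -> m_primary I ->
  (forall i, mingen I (xpow i (d i))) ->
  good I d ->
  forall g, mingen I g ->
    (1 <= \sum_(i < n) ((g i)%:R / (d i)%:R) :> rat)%R.
Proof.
move=> _ [not_one _] gen_d good_I g [Ig _].
have d_pos i : 0 < d i by have [Ixi _] := gen_d i; exact: pure_power_pos Ixi.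
apply: ge1_of_power_bounds => l l_pos.
exact: good_power_bound d_pos good_I Ig l_pos.
Qed.
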